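(* Let $X$ and $\tilde X$ be entrywise nonnegative real symmetric matrices such that $I\succeq X$, $I\succeq\tilde X$, and $I-\tilde X\approx_\epsilon I-\tfrac12X-\tfrac12X^2$. If $\rho(X)\le 1-\lambda$, then all eigenvalues of $\tilde X$ lie between $1-\tfrac12(3-\lambda)e^{\epsilon}$ and $1-\tfrac12(3\lambda-\lambda^2)e^{-\epsilon}$.
   Context: $\rho$ denotes spectral radius; $\succeq$ is the Loewner order; $A\approx_\epsilon B$ means $e^{\epsilon}A\succeq B\succeq e^{-\epsilon}A$. *)

From mathcomp Require Import all_boot all_order all_algebra.
From mathcomp Require Import reals sequences exp.
From mathcomp Require Import complex.
Set Implicit Arguments. Unset Strict Implicit. Unset Printing Implicit Defensive.
Import Order.TTheory GRing.Theory Num.Theory.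
Local Open Scope ring_scope.

Definition psd (R : realType) (n : nat) (A : 'M[R]_n) : Prop :=
  forall v : 'cV[R]_n, 0 <= (v^T *m A *m v) 0 0.

Definition loewner_ge (R : realType) (n : nat) (A B : 'M[R]_n) : Prop :=
  psd (A - B).

Definition approx_eps (R : realType) (n : nat) (eps : R) (A B : 'M[R]_n) : Prop :=
  loewner_ge (expR eps *: A) B /\ loewner_ge B (expR (- eps) *: A).

Definition symmetric_mx (R : realType) (n : nat) (A : 'M[R]_n) : Prop :=
  A^T = A.

Definition nonneg_mx (R : realType) (n : nat) (A : 'M[R]_n) : Prop :=
  forall i j, 0 <= A i j.

Definition spectral_radius_le (R : realType) (n : nat) (A : 'M[R]_n) (r : R) : Prop :=
  forall z : R[i], eigenvalue (map_mx (fun x : R => (x%:C)%C) A) z -> `|z| <= (r%:C)%C.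

From mathcomp Require Import all_boot all_order all_algebra.
From mathcomp Require Import reals sequences exp.
From mathcomp Require Import complex.
From mathcomp Require Import ring lra.
Set Implicit Arguments. Unset Strict Implicit. Unset Printing Implicit Defensive.
Import Order.TTheory GRing.Theory Num.Theory.
Local Open Scope ring_scope.
Local Open Scope sesquilinear_scope.

(* Diagonalising the real symmetric matrix X unitarily over C writes the
   quadratic form of I - X/2 - X^2/2 as a nonnegative combination of the values
   of p(x) = 1 - x/2 - x^2/2 at the eigenvalues of X, which lie in [-r, r] for
   r = 1 - lam; there p lies between p(r) = (3 lam - lam^2)/2 and
   1 + r/2 = (3 - lam)/2.  Evaluating the e^eps-approximation at an eigenvector
   of Xt with eigenvalue mu then traps 1 - mu between e^-eps p(r) and
   e^eps (3 - lam)/2. *)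

Section NormalSpectral.
Variables (C : numClosedFieldType) (n : nat) (A : 'M[C]_n).
Hypothesis A_normal : A \is normalmx.

Let P := spectralmx A.
Let d := spectral_diag A.

Lemma normalmx_spectralE : A = P^t* *m diag_mx d *m P.
Proof. by rewrite -invmx_unitary ?spectral_unitarymx //; apply/orthomx_spectralP. Qed.

Lemma spectral_diag_eigenvalue j : eigenvalue A (d 0 j).
Proof.
have P_unitary : P \is unitarymx by apply: spectral_unitarymx.
apply/eigenvalueP; exists (row j P).
  rewrite -row_mul {1}normalmx_spectralE !mulmxA (unitarymxP P_unitary) mul1mx.
  by rewrite mul_diag_mx; apply/rowP => k; rewrite !mxE.
apply: contraNneq (oner_neq0 C) => Pj0.
have /rowP/(_ j) := congr1 (row j) (unitarymxP P_unitary).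
by rewrite row_mul Pj0 mul0mx !mxE eqxx => ->.
Qed.

Lemma normalmx_exprE k : A ^+ k = P^t* *m diag_mx (\row_j d 0 j ^+ k) *m P.
Proof.
have P_unitary : P \is unitarymx by apply: spectral_unitarymx.
elim: k => [|k IHk].
  have -> : diag_mx (\row_j d 0 j ^+ 0) = 1%:M.
    by apply/matrixP => i j; rewrite !mxE expr0.
  by rewrite expr0 mulmx1 -[P^t*]mul1mx mulmxKtV.
rewrite exprSr IHk [in X in _ * X]normalmx_spectralE -mulmxE !mulmxA mulmxtVK //.
rewrite -[_ *m diag_mx d]mulmxA mulmx_diag.
by congr (_ *m diag_mx _ *m _); apply/rowP => j; rewrite !mxE exprSr.
Qed.

End NormalSpectral.

Lemma quadform_conj_diag (C : numClosedFieldType) n (P : 'M[C]_n) (d : 'rV[C]_n)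
    (u : 'cV[C]_n) :
  (u^t* *m (P^t* *m diag_mx d *m P) *m u) 0 0 = \sum_j d 0 j * `|(P *m u) j 0| ^+ 2.
Proof.
have -> : u^t* *m (P^t* *m diag_mx d *m P) *m u
    = (P *m u)^t* *m diag_mx d *m (P *m u).
  by rewrite trmx_mul map_mxM !mulmxA.
rewrite mul_mx_diag mxE; apply: eq_bigr => j _; rewrite !mxE normCKC; ring.
Qed.

Section RealQuadraticForms.
Variable R : realType.
Local Notation toC := (real_complex R).

Definition quadform n (A : 'M[R]_n) (u : 'cV[R]_n) : R := (u^T *m A *m u) 0 0.

Lemma quadformB n (A B : 'M[R]_n) u : quadform (A - B) u = quadform A u - quadform B u.
Proof. by rewrite /quadform mulmxBr mulmxBl !mxE. Qed.

Lemma quadformZ n a (A : 'M[R]_n) u : quadform (a *: A) u = a * quadform A u.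
Proof. by rewrite /quadform -scalemxAr -scalemxAl mxE. Qed.

Lemma loewner_ge_quadform n (A B : 'M[R]_n) u :
  loewner_ge A B -> quadform B u <= quadform A u.
Proof. by move=> AB; rewrite -subr_ge0 -quadformB; apply: AB. Qed.

Lemma quadform1_gt0 n (u : 'cV[R]_n) : u != 0 -> 0 < quadform 1%:M u.
Proof.
move=> u_neq0; have -> : quadform 1%:M u = \sum_i u i 0 ^+ 2.
  by rewrite /quadform mulmx1 mxE; apply: eq_bigr => i _; rewrite mxE expr2.
rewrite lt_neqAle sumr_ge0 ?andbT => [|i _]; last exact: sqr_ge0.
apply: contra u_neq0 => /eqP/esym/psumr_eq0P u20; apply/eqP/colP => i.
by rewrite mxE; apply/eqP; rewrite -sqrf_eq0 u20 // => j _; apply: sqr_ge0.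
Qed.

Lemma quadform_eigenvector n (A : 'M[R]_n) (v : 'rV[R]_n) mu :
  v *m A = mu *: v -> quadform A v^T = mu * quadform 1%:M v^T.
Proof. by move=> vA; rewrite /quadform trmxK vA mulmx1 -scalemxAl mxE. Qed.

Lemma symmetric_hermsymmx n (X : 'M[R]_n) :
  symmetric_mx X -> map_mx toC X \is hermsymmx.
Proof.
move=> X_sym; apply/is_hermitianmxP; rewrite expr0 scale1r.
by apply/matrixP => i j; rewrite !mxE conj_Creal ?complex_real // -{1}X_sym mxE.
Qed.

Lemma symmetric_quadform_spectral n (X : 'M[R]_n) (u : 'cV[R]_n) :
  symmetric_mx X ->
  exists x w : 'I_n -> R, [/\ forall j, eigenvalue (map_mx toC X) (toC (x j)),
    forall j, 0 <= w j & forall k, quadform (X ^+ k) u = \sum_j w j * x j ^+ k].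
Proof.
move=> /symmetric_hermsymmx X_herm; set A := map_mx toC X in X_herm.
have A_normal := hermitian_normalmx X_herm.
have d_real := hermitian_spectral_diag_real X_herm.
set d := spectral_diag A in d_real; set z := spectralmx A *m map_mx toC u.
exists (fun j => complex.Re (d 0 j)),
  (fun j => complex.Re (z j 0) ^+ 2 + complex.Im (z j 0) ^+ 2); split.
- by move=> j; rewrite RRe_real ?(mxOverP d_real) ?spectral_diag_eigenvalue.
- by move=> j; rewrite addr_ge0 ?sqr_ge0.
move=> k; apply: complexI; rewrite rmorph_sum /=.
have u_real : (map_mx toC u)^t* = map_mx toC u^T.
  by apply/matrixP => i j; rewrite !mxE conj_Creal ?complex_real.
have -> : toC (quadform (X ^+ k) u) = (map_mx toC (u^T *m X ^+ k *m u)) 0 0.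
  by rewrite mxE.
rewrite !map_mxM -u_real.
have -> : map_mx toC (X ^+ k) = A ^+ k by rewrite rmorphXn.
rewrite normalmx_exprE // quadform_conj_diag; apply: eq_bigr => j _.
by rewrite mxE rmorphM rmorphXn /= RRe_real ?(mxOverP d_real) // add_Re2_Im2 mulrC.
Qed.

Lemma quadform_half_poly_bounds n (X : 'M[R]_n) r u :
  symmetric_mx X -> spectral_radius_le X r ->
  let B := 1%:M - 2^-1 *: X - 2^-1 *: (X *m X) in
  (1 - 2^-1 * r - 2^-1 * r ^+ 2) * quadform 1%:M u <= quadform B u /\
  quadform B u <= (1 + 2^-1 * r) * quadform 1%:M u.
Proof.
move=> X_sym X_rad B.
have [x [w [x_eig w_ge0 quadX]]] := symmetric_quadform_spectral u X_sym.
have x_bound j : `|x j| <= r.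
  by rewrite -lecR (le_trans (normc_ge_Re (toC (x j)))) ?X_rad.
have := quadX 0%N; have := quadX 1%N; have := quadX 2%N.
rewrite expr0 expr1 expr2 -mulmxE => q2 q1 q0.
have BE : quadform B u = \sum_j w j * (1 - 2^-1 * x j - 2^-1 * x j ^+ 2).
  rewrite !quadformB !quadformZ q0 q1 q2 !mulr_sumr -!sumrB.
  by apply: eq_bigr => j _; rewrite expr0 expr1; ring.
rewrite BE q0 !mulr_sumr; split; apply: ler_sum => j _;
  rewrite expr0 mulr1 [_ * w j]mulrC; apply: ler_wpM2l => //;
  have := x_bound j; rewrite ler_norml; nra.
Qed.
End RealQuadraticForms.

Theorem mainTheorem8 (R : realType) (n : nat) (X Xt : 'M[R]_n) (eps lam : R) :
  symmetric_mx X -> symmetric_mx Xt ->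
  nonneg_mx X -> nonneg_mx Xt ->
  loewner_ge 1%:M X -> loewner_ge 1%:M Xt ->
  approx_eps eps (1%:M - Xt) (1%:M - 2^-1 *: X - 2^-1 *: (X *m X)) ->
  spectral_radius_le X (1 - lam) ->
  forall mu : R, eigenvalue Xt mu ->
    1 - 2^-1 * (3 - lam) * expR eps <= mu /\
    mu <= 1 - 2^-1 * (3 * lam - lam ^+ 2) * expR (- eps).
Proof.
move=> X_sym _ _ _ _ _ [B_le B_ge] X_rad mu /eigenvalueP [v vXt v_neq0].
set B := 1%:M - _ - _ in B_le B_ge; set u := v^T.
have N_gt0 : 0 < quadform 1%:M u by apply: quadform1_gt0; rewrite trmx_eq0.
have [B_lo B_hi] := quadform_half_poly_bounds u X_sym X_rad.
have Xt_eig : quadform (1%:M - Xt) u = (1 - mu) * quadform 1%:M u.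
  by rewrite quadformB (quadform_eigenvector vXt) mulrBl mul1r.
have := loewner_ge_quadform u B_le; have := loewner_ge_quadform u B_ge.
rewrite !quadformZ Xt_eig -/B => qB_ge qB_le.
have gap_lo : 1 - 2^-1 * (1 - lam) - 2^-1 * (1 - lam) ^+ 2 <= expR eps * (1 - mu).
  by rewrite -(ler_pM2r N_gt0) -mulrA (le_trans B_lo qB_le).
have gap_hi : expR (- eps) * (1 - mu) <= 1 + 2^-1 * (1 - lam).
  by rewrite -(ler_pM2r N_gt0) -mulrA (le_trans qB_ge B_hi).
have ea := expR_gt0 eps; have eb := expR_gt0 (- eps).
have eab : expR eps * expR (- eps) = 1 by rewrite -expRD subrr expR0.
split; nra.
Qed.
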